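(* Let $L\ge 1$ and $N_\nu\ge 1$ be integers. Suppose there are finitely many paths indexed by $l$, each with a path metric $\mathrm{PM}_l\in\mathbb{R}$ and an LLR vector $\alpha_l=(\alpha_{0,l},\dots,\alpha_{N_\nu-1,l})\in(\mathbb{R}\setminus\{0\})^{N_\nu}$. Assume that for each $l$ the absolute values $|\alpha_{i,l}|$ are pairwise distinct and that the entries are indexed so that $|\alpha_{0,l}|<|\alpha_{1,l}|<\dots<|\alpha_{N_\nu-1,l}|$. A candidate is a pair $(l,\eta)$ with $\eta\in\{+1,-1\}^{N_\nu}$, and its metric is $$M(l,\eta)=\mathrm{PM}_l+\sum_{i=0}^{N_\nu-1}\ln\left(1+e^{-\eta_i\alpha_{i,l}}\right).$$ If a candidate $(l,\eta)$ has $\eta_k\neq \operatorname{sgn}(\alpha_{k,l})$ for some index $k\ge L-1$, then there exist at least $L$ candidates of the form $(l,\eta')$ with $\eta'\neq\eta$ and $M(l,\eta')<M(l,\eta)$. Consequently, every candidate $(l,\eta)$ belonging to some set of $L$ candidates of smallest metric (the set of survivors of successive-cancellation list decoding with list size $L$ over a Rate-1 node) satisfies $\eta_i=\operatorname{sgn}(\alpha_{i,l})$ for all $i\ge L-1$. In other words, path splitting is needed at most at the $\min(L-1,N_\nu)$ least reliable positions of each path, and all remaining bits equal the hard decision on the LLR ($\beta_{i,l}=0$ if $\alpha_{i,l}\ge0$, and $1$ otherwise).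
   Context: Setting: list decoding of a Rate-1 constituent code (all $N_\nu$ bits are information bits) of a polar code. A bit estimate $\beta\in\{0,1\}$ is encoded as $\eta=1-2\beta\in\{+1,-1\}$. $\operatorname{sgn}$ denotes the sign function. In successive-cancellation list decoding with list size $L$, the $L$ candidates of smallest path metric survive. The ordering of LLRs by increasing absolute value is the reliability order, with index $0$ the least reliable. *)

From Stdlib Require Import Reals List.
Import ListNotations.
Open Scope R_scope.

Fixpoint rsum (f : nat -> R) (n : nat) : R :=
  match n with
  | O => 0
  | S m => rsum f m + f m
  end.

Definition sgn (x : R) : R :=
  if Rlt_dec 0 x then 1 else if Rlt_dec x 0 then -1 else 0.

Definition bipolar (N : nat) (eta : list R) : Prop :=
  length eta = N /\ Forall (fun x => x = 1 \/ x = -1) eta.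

(* Candidate metric M(l, eta) = PM_l + sum_{i<N} ln(1 + exp(-eta_i * alpha_{i,l})).
   alpha l i is the LLR alpha_{i,l}; eta_i is nth i eta 0. *)
Definition metric (N : nat) (PM : nat -> R) (alpha : nat -> nat -> R)
  (l : nat) (eta : list R) : R :=
  PM l + rsum (fun i => ln (1 + exp (- (nth i eta 0) * alpha l i))) N.

Definition candidate (P N : nat) (c : nat * list R) : Prop :=
  (fst c < P)%nat /\ bipolar N (snd c).

(* S is a set of L candidates of smallest metric (ties broken arbitrarily). *)
Definition survivors (P N L : nat) (PM : nat -> R) (alpha : nat -> nat -> R)
  (S : list (nat * list R)) : Prop :=
  NoDup S /\ length S = L /\ Forall (candidate P N) S /\
  (forall c c', In c S -> candidate P N c' -> ~ In c' S ->
     metric N PM alpha (fst c) (snd c) <= metric N PM alpha (fst c') (snd c')).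

(* Flipping bit k of a candidate changes its metric by exactly eta_k * alpha_k, because
   ln (1 + e^a) - ln (1 + e^-a) = a.  If eta_k disagrees with the hard decision this
   change is -|alpha_k|, so flipping bit k improves the metric by |alpha_k|; flipping in
   addition any less reliable bit j < k costs at most |alpha_j| < |alpha_k|.  This gives
   k + 1 >= L distinct strictly better candidates on the same path, so such a candidate
   cannot be among L survivors of smallest metric. *)

From Stdlib Require Import Reals List Lra Lia Classical.
Import ListNotations.
Open Scope R_scope.

Fixpoint flip (k : nat) (eta : list R) : list R :=
  match eta, k with
  | [], _ => []
  | x :: t, O => - x :: t
  | x :: t, S k' => x :: flip k' t
  end.

Lemma length_flip k eta : length (flip k eta) = length eta.
Proof. revert k; induction eta as [|x t IH]; intros [|k]; simpl; auto. Qed.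

(* Also holds out of range, where both sides are the default [0 = - 0]. *)
Lemma nth_flip_eq k eta : nth k (flip k eta) 0 = - nth k eta 0.
Proof.
  revert k; induction eta as [|x t IH]; intros [|k]; simpl; auto; lra.
Qed.

Lemma nth_flip_neq k i eta : i <> k -> nth i (flip k eta) 0 = nth i eta 0.
Proof.
  revert k i; induction eta as [|x t IH]; intros [|k] [|i] Hik; simpl; auto; lia.
Qed.

Lemma flipK k eta : flip k (flip k eta) = eta.
Proof.
  revert k; induction eta as [|x t IH]; intros [|k]; simpl; f_equal; auto; ring.
Qed.

Lemma flip_neq k eta : nth k eta 0 <> 0 -> flip k eta <> eta.
Proof.
  intros Hk E. apply Hk. assert (H := nth_flip_eq k eta). rewrite E in H. lra.
Qed.

Lemma flip_inj_index i j eta : nth i eta 0 <> 0 -> flip i eta = flip j eta -> i = j.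
Proof.
  intros Hi E. destruct (Nat.eq_dec i j) as [|Hij]; auto. exfalso.
  assert (H := nth_flip_eq i eta). rewrite E, nth_flip_neq in H by auto. lra.
Qed.

Lemma bipolar_flip N k eta : bipolar N eta -> bipolar N (flip k eta).
Proof.
  intros [Hlen HF]. split; [now rewrite length_flip|].
  clear Hlen. revert k; induction HF as [|x t Hx HF IH]; intros [|k]; simpl; auto.
  constructor; auto. lra.
Qed.

Lemma bipolar_nth N eta k :
  bipolar N eta -> (k < N)%nat -> nth k eta 0 = 1 \/ nth k eta 0 = -1.
Proof.
  intros [Hlen HF] Hk. rewrite Forall_forall in HF. apply HF, nth_In. lia.
Qed.

Lemma bipolar_nth_neq0 N eta k : bipolar N eta -> (k < N)%nat -> nth k eta 0 <> 0.
Proof. intros Hb Hk. destruct (bipolar_nth N eta k Hb Hk); lra. Qed.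

Lemma sign_mul_le_Rabs e a : e = 1 \/ e = -1 -> e * a <= Rabs a.
Proof.
  intros [-> | ->].
  - rewrite Rmult_1_l. apply Rle_abs.
  - replace (-1 * a) with (- a) by ring. rewrite <- Rabs_Ropp. apply Rle_abs.
Qed.

Lemma sign_neq_sgn_mul e a :
  e = 1 \/ e = -1 -> a <> 0 -> e <> sgn a -> e * a = - Rabs a.
Proof.
  unfold sgn, Rabs. intros [-> | ->] Ha Hs;
  destruct (Rlt_dec 0 a), (Rcase_abs a); try destruct (Rlt_dec a 0); lra.
Qed.

Lemma rsum_ext f g N : (forall i, (i < N)%nat -> f i = g i) -> rsum f N = rsum g N.
Proof.
  induction N as [|N IH]; intros H; simpl; auto.
  rewrite IH, H; [reflexivity | lia | intros i Hi; apply H; lia].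
Qed.

Lemma rsum_change_one f g j N : (j < N)%nat -> (forall i, i <> j -> g i = f i) ->
  rsum g N = rsum f N + (g j - f j).
Proof.
  intros Hj H. induction N as [|N IH]; [lia|]. simpl.
  destruct (Nat.eq_dec j N) as [<-|Hne].
  - rewrite (rsum_ext g f); [lra | intros i Hi; apply H; lia].
  - rewrite IH, (H N) by lia. lra.
Qed.

Lemma ln_1_plus_exp_sub_opp a : ln (1 + exp a) - ln (1 + exp (- a)) = a.
Proof.
  replace (1 + exp a) with (exp a * (1 + exp (- a))).
  - rewrite ln_mult, ln_exp; [lra | apply exp_pos |].
    pose proof (exp_pos (- a)); lra.
  - rewrite Rmult_plus_distr_l, <- exp_plus.
    replace (a + - a) with 0 by ring. rewrite exp_0. ring.
Qed.

Lemma metric_flip N PM alpha l eta j : (j < N)%nat ->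
  metric N PM alpha l (flip j eta) = metric N PM alpha l eta + nth j eta 0 * alpha l j.
Proof.
  intros Hj. unfold metric.
  rewrite (rsum_change_one (fun i => ln (1 + exp (- nth i eta 0 * alpha l i)))
             _ j N Hj) by (intros i Hi; now rewrite nth_flip_neq).
  rewrite nth_flip_eq.
  rewrite <- (ln_1_plus_exp_sub_opp (nth j eta 0 * alpha l j)).
  replace (- - nth j eta 0 * alpha l j) with (nth j eta 0 * alpha l j) by ring.
  replace (- (nth j eta 0 * alpha l j)) with (- nth j eta 0 * alpha l j) by ring.
  ring.
Qed.

Definition improving_flips (k : nat) (eta : list R) : list (list R) :=
  flip k eta :: map (fun j => flip j (flip k eta)) (seq 0 k).

Lemma length_improving_flips k eta : length (improving_flips k eta) = S k.
Proof. simpl. now rewrite length_map, length_seq. Qed.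

Lemma NoDup_improving_flips N k eta : bipolar N eta -> (k < N)%nat ->
  NoDup (improving_flips k eta).
Proof.
  intros Hb Hk. set (eta0 := flip k eta).
  assert (Hb0 : bipolar N eta0) by now apply bipolar_flip.
  constructor.
  - intros Hin. apply in_map_iff in Hin as [j [Ej Hj]]. apply in_seq in Hj.
    apply (flip_neq j eta0); auto. apply (bipolar_nth_neq0 N); auto; lia.
  - apply NoDup_map_NoDup_ForallPairs; [|apply seq_NoDup].
    intros i j Hi Hj E. apply in_seq in Hi.
    apply (flip_inj_index i j eta0); auto. apply (bipolar_nth_neq0 N); auto; lia.
Qed.

Lemma improving_flips_better N PM alpha l eta k :
  bipolar N eta -> (k < N)%nat -> alpha l k <> 0 -> nth k eta 0 <> sgn (alpha l k) ->
  (forall j, (j < k)%nat -> Rabs (alpha l j) < Rabs (alpha l k)) ->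
  Forall (fun eta' => bipolar N eta' /\ eta' <> eta /\
            metric N PM alpha l eta' < metric N PM alpha l eta)
         (improving_flips k eta).
Proof.
  intros Hb Hk Hnz Hmis Hless.
  assert (Hbk : nth k eta 0 <> 0) by now apply (bipolar_nth_neq0 N).
  assert (Hm0 : metric N PM alpha l (flip k eta) =
                metric N PM alpha l eta - Rabs (alpha l k)).
  { rewrite metric_flip, sign_neq_sgn_mul by (auto; now apply (bipolar_nth N)). lra. }
  pose proof (Rabs_pos_lt _ Hnz) as Hpos.
  constructor.
  - split; [now apply bipolar_flip|]. split; [now apply flip_neq | lra].
  - apply Forall_forall. intros eta' Hin.
    apply in_map_iff in Hin as [j [<- Hj]]. apply in_seq in Hj.
    split; [now apply bipolar_flip, bipolar_flip|]. split.
    + intros E. apply (f_equal (flip j)) in E. rewrite flipK in E.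
      apply (flip_inj_index k j eta) in E; [lia | exact Hbk].
    + rewrite metric_flip, Hm0, nth_flip_neq by lia.
      pose proof (sign_mul_le_Rabs (nth j eta 0) (alpha l j)
                    (bipolar_nth N eta j Hb ltac:(lia))).
      pose proof (Hless j ltac:(lia)). lra.
Qed.

(* Every strictly better candidate on the same path must itself survive, and is
   distinct from the survivor it beats. *)
Lemma survivors_better_length P N L PM alpha S l eta etas :
  survivors P N L PM alpha S -> In (l, eta) S -> NoDup etas ->
  Forall (fun eta' => bipolar N eta' /\
            metric N PM alpha l eta' < metric N PM alpha l eta) etas ->
  (length etas < L)%nat.
Proof.
  intros [HnS [HlS [HcS Hmin]]] Hin Hnd Hbetter.
  rewrite Forall_forall in HcS, Hbetter.
  destruct (HcS _ Hin) as [Hl _]. simpl in Hl.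
  assert (Hincl : incl ((l, eta) :: map (pair l) etas) S).
  { intros c [<-|Hc]; auto. apply in_map_iff in Hc as [e [<- He]].
    destruct (Hbetter e He) as [Hbe Hlt].
    apply NNPP. intros Hout.
    pose proof (Hmin _ (l, e) Hin (conj Hl Hbe) Hout). simpl in *. lra. }
  assert (Hnd' : NoDup ((l, eta) :: map (pair l) etas)).
  { constructor.
    - intros Hc. apply in_map_iff in Hc as [e [He He']]. injection He as ->.
      destruct (Hbetter eta He'). lra.
    - apply NoDup_map_NoDup_ForallPairs; auto. intros x y _ _ E. now injection E. }
  pose proof (NoDup_incl_length Hnd' Hincl) as Hlen. simpl in Hlen.
  rewrite length_map in Hlen. lia.
Qed.

Theorem theorem1 (L N P : nat) (PM : nat -> R) (alpha : nat -> nat -> R)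
  (HL : (1 <= L)%nat) (HN : (1 <= N)%nat)
  (Hnz : forall l i, (l < P)%nat -> (i < N)%nat -> alpha l i <> 0)
  (Hord : forall l i j, (l < P)%nat -> (i < j)%nat -> (j < N)%nat ->
            Rabs (alpha l i) < Rabs (alpha l j)) :
  (forall l eta, (l < P)%nat -> bipolar N eta ->
     (exists k, (L - 1 <= k)%nat /\ (k < N)%nat /\ nth k eta 0 <> sgn (alpha l k)) ->
     exists etas : list (list R),
       (L <= length etas)%nat /\ NoDup etas /\
       Forall (fun eta' => bipolar N eta' /\ eta' <> eta /\
                 metric N PM alpha l eta' < metric N PM alpha l eta) etas)
  /\
  (forall S, survivors P N L PM alpha S ->
     forall l eta, In (l, eta) S ->
       forall i, (L - 1 <= i)%nat -> (i < N)%nat -> nth i eta 0 = sgn (alpha l i)).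
Proof.
  split.
  - intros l eta Hl Hb [k [Hk1 [Hk2 Hmis]]]. exists (improving_flips k eta).
    rewrite length_improving_flips.
    split; [lia | split; [now apply (NoDup_improving_flips N) |]].
    apply improving_flips_better; auto.
  - intros S HS l eta Hin i Hi1 Hi2. apply NNPP. intros Hmis.
    assert (Hcand : candidate P N (l, eta)).
    { destruct HS as [_ [_ [HcS _]]]. rewrite Forall_forall in HcS. now apply HcS. }
    destruct Hcand as [Hl Hb]. simpl in Hl, Hb.
    pose proof (survivors_better_length P N L PM alpha S l eta (improving_flips i eta)
                  HS Hin (NoDup_improving_flips N i eta Hb Hi2)) as Hlen.
    rewrite length_improving_flips in Hlen.
    enough (i + 1 < L)%nat by lia. rewrite Nat.add_1_r. apply Hlen.
    eapply Forall_impl; [|apply (improving_flips_better N PM alpha l eta i); auto].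
    simpl. tauto.
Qed.
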